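(* Let $F$ be a connected, compact, simple Lie group and $m\ge 2$. An $F^m$-invariant Riemannian metric on the Ledger--Obata space $F^m/\mathrm{diag}(F)$ is naturally reductive if and only if it is generated by a pair $(\mathfrak{p},(\cdot,\cdot))$ such that one of the following holds: (a) $\mathfrak{p}$ is an ideal of $\mathfrak{g}$ isomorphic to $(m-1)\mathfrak{f}$ (i.e. the direct sum of $m-1$ of the $m$ simple summands $\mathfrak f$ of $\mathfrak g$) and $(\cdot,\cdot)$ is an $\mathrm{ad}(\mathfrak{p})$-invariant inner product on it, so that $(\cdot,\cdot)=\sum_{i}\beta_i\langle\cdot,\cdot\rangle_i$, the sum running over the $m-1$ summands contained in $\mathfrak p$, with all $\beta_i>0$; or (b) there is an $\mathrm{ad}(\mathfrak{g})$-invariant quadratic form $Q=\sum_{i=1}^m\alpha_i\langle\cdot,\cdot\rangle_i$ on $\mathfrak{g}$ with all $\alpha_i\neq 0$, such that $\mathfrak{p}$ is the $Q$-orthogonal complement of $\mathfrak{h}=\mathrm{diag}(\mathfrak f)$ in $\mathfrak{g}$ and $(\cdot,\cdot)=Q|_{\mathfrak p}$, where either (i) $\alpha_i>0$ for all $i=1,\dots,m$, or (ii) there is $j\in\{1,\dots,m\}$ with $\alpha_j<0$, $\alpha_i>0$ for all $i\neq j$, and $S:=\sum_{i=1}^m\alpha_i<0$.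
   Context: $F$ is a connected compact simple Lie group with Lie algebra $\mathfrak f$; $G=F^m$, $H=\mathrm{diag}(F)=\{(x,\dots,x):x\in F\}$, $\mathfrak g=m\mathfrak f=\mathfrak f\oplus\cdots\oplus\mathfrak f$, $\mathfrak h=\mathrm{diag}(\mathfrak f)=\{(X,\dots,X):X\in\mathfrak f\}$. $\langle\cdot,\cdot\rangle$ denotes minus the Killing form of $\mathfrak g$ and $\langle\cdot,\cdot\rangle_i$ its restriction to the $i$-th copy of $\mathfrak f$ (extended by zero on the other summands). An $F^m$-invariant metric on $G/H$ corresponds to an $\mathrm{Ad}(H)$-invariant inner product $(\cdot,\cdot)$ on an $\mathrm{Ad}(H)$-invariant complement $\mathfrak p$ of $\mathfrak h$ in $\mathfrak g$ (identified with the tangent space at $eH$). Such a metric is naturally reductive if the $\mathrm{Ad}(H)$-invariant complement $\mathfrak p$ can be chosen so that $([X,Y]_{\mathfrak p},X)=0$ for all $X,Y\in\mathfrak p$, where $[X,Y]_{\mathfrak p}$ is the $\mathfrak p$-component with respect to $\mathfrak g=\mathfrak h\oplus\mathfrak p$; the metric is then said to be generated by the pair $(\mathfrak p,(\cdot,\cdot))$. *)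

From HB Require Import structures.
From mathcomp Require Import all_boot all_order all_algebra.
Set Implicit Arguments. Unset Strict Implicit. Unset Printing Implicit Defensive.
Import Order.TTheory GRing.Theory Num.Theory.
Local Open Scope ring_scope.

Section LO.
Variable R : rcfType.

Definition vtrace (V : vectType R) (h : V -> V) : R :=
  \sum_(i < \dim (fullv : {vspace V}))
     coord (vbasis fullv) i (h (tnth (vbasis (fullv : {vspace V})) i)).

Definition mkilling (V : vectType R) (br : V -> V -> V) (x y : V) : R :=
  - vtrace (fun z => br x (br y z)).

(* f = (fT, br) is a real Lie algebra which is compact (negative definite
   Killing form) and simple (non-abelian, no non-trivial ideals). *)
Definition compact_simple_lie (fT : vectType R) (br : fT -> fT -> fT) : Prop :=
  (forall a x y z, br (a *: x + y) z = a *: br x z + br y z) /\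
      (forall a x y z, br z (a *: x + y) = a *: br z x + br z y) /\
      (forall x, br x x = 0) /\
      (forall x y z, br x (br y z) + br y (br z x) + br z (br x y) = 0) /\
      (forall x, x != 0 -> 0 < mkilling br x x) /\
      (exists x y, br x y != 0) /\
      (forall I : {vspace fT},
          (forall x y, y \in I -> br x y \in I) -> I = 0%VS \/ I = fullv).

Variables (fT : vectType R) (m : nat).

Definition gT := {ffun 'I_m -> fT}.

Definition gbr (br : fT -> fT -> fT) (X Y : gT) : gT := [ffun i => br (X i) (Y i)].

Definition gkil (br : fT -> fT -> fT) (X Y : gT) : R := mkilling (gbr br) X Y.

Definition gproj (i : 'I_m) (X : gT) : gT :=
  [ffun k => if k == i then X i else 0].

Definition gkil_i (br : fT -> fT -> fT) (i : 'I_m) (X Y : gT) : R :=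
  gkil br (gproj i X) (gproj i Y).

Definition diagf (x : fT) : gT := [ffun _ => x].
Definition hsp : {vspace gT} := limg (linfun diagf).

(* (p, ip) is an Ad(H)-invariant complement of h with an Ad(H)-invariant
   inner product on it, i.e. it defines an F^m-invariant metric on G/H. *)
Definition metric_pair (br : fT -> fT -> fT) (p : {vspace gT})
    (ip : gT -> gT -> R) : Prop :=
  (p + hsp)%VS = fullv /\ (p :&: hsp)%VS = 0%VS /\
      (forall Z X, Z \in hsp -> X \in p -> gbr br Z X \in p) /\
      (forall X Y, X \in p -> Y \in p -> ip X Y = ip Y X) /\
      (forall a X Y Z, X \in p -> Y \in p -> Z \in p ->
          ip (a *: X + Y) Z = a * ip X Z + ip Y Z) /\
      (forall X, X \in p -> X != 0 -> 0 < ip X X) /\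
      (forall Z X Y, Z \in hsp -> X \in p -> Y \in p ->
          ip (gbr br Z X) Y + ip X (gbr br Z Y) = 0).

(* two pairs define the same metric on G/H (tangent space g/h) *)
Definition same_metric (p : {vspace gT}) (ip : gT -> gT -> R)
    (p' : {vspace gT}) (ip' : gT -> gT -> R) : Prop :=
  forall X Y X' Y', X \in p -> Y \in p -> X' \in p' -> Y' \in p' ->
    X' - X \in hsp -> Y' - Y \in hsp -> ip' X' Y' = ip X Y.

(* ([X,Y]_p, X) = 0 for all X, Y in p, where [X,Y]_p is the p-component
   of [X,Y] with respect to g = h + p *)
Definition nat_red_pair (br : fT -> fT -> fT) (p : {vspace gT})
    (ip : gT -> gT -> R) : Prop :=
  forall X Y W, X \in p -> Y \in p -> W \in p ->
    gbr br X Y - W \in hsp -> ip W X = 0.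

Definition naturally_reductive (br : fT -> fT -> fT) (p0 : {vspace gT})
    (ip0 : gT -> gT -> R) : Prop :=
  exists (p : {vspace gT}) (ip : gT -> gT -> R),
    [/\ metric_pair br p ip, same_metric p0 ip0 p ip & nat_red_pair br p ip].

Definition case_a (br : fT -> fT -> fT) (p : {vspace gT})
    (ip : gT -> gT -> R) : Prop :=
  exists (j : 'I_m) (beta : 'I_m -> R),
    [/\ (forall X, (X \in p) = (X j == 0)),
        (forall i, i != j -> 0 < beta i) &
        (forall X Y, X \in p -> Y \in p ->
           ip X Y = \sum_(i < m | i != j) beta i * gkil_i br i X Y)].

Definition Qform (br : fT -> fT -> fT) (alpha : 'I_m -> R) (X Y : gT) : R :=
  \sum_(i < m) alpha i * gkil_i br i X Y.

Definition case_b (br : fT -> fT -> fT) (p : {vspace gT})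
    (ip : gT -> gT -> R) : Prop :=
  exists alpha : 'I_m -> R,
    [/\ (forall i, alpha i != 0),
        (forall X, X \in p <-> (forall Z, Z \in hsp -> Qform br alpha X Z = 0)),
        (forall X Y, X \in p -> Y \in p -> ip X Y = Qform br alpha X Y) &
        ((forall i, 0 < alpha i) \/
         (exists j, [/\ alpha j < 0, (forall i, i != j -> 0 < alpha i) &
                        \sum_(i < m) alpha i < 0]))].

End LO.

(* Write X in g = m f as its p-part plus its h-part diag (phi X). The map phi : g -> f is
   ad(f)-equivariant and the inner product, pulled back to g along the projection onto p,
   is ad(h)-invariant. Schur's lemma for the compact simple f (a real Schur lemma: an
   invariant complex structure would make the Killing form indefinite) gives
   phi X = sum_i c_i X_i with sum_i c_i = 1, and makes the pulled-back form
   sum_ij M_ij B(X_i, Y_j), M symmetric with zero row sums, B minus the Killing form.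
   On tensors a (x) x with sum_i c_i a_i = 0, natural reductivity becomes an identity
   between the coefficients forcing M to act diagonally on that hyperplane:
   (M a)_l = kap_l a_l. If c is a standard basis vector e_j this is case (a) with
   beta = kap; otherwise kap = (sum_i kap_i) c, and positivity of the metric on a few
   explicit vectors of the hyperplane gives the sign conditions of case (b) with
   alpha = kap. Conversely, in both cases ([X,Y]_p, X) reduces to
   sum_i alpha_i B([X_i,Y_i], X_i) = 0. *)

From HB Require Import structures.
From mathcomp Require Import all_boot all_order all_algebra.
From mathcomp Require Import complex.
From mathcomp Require Import ring lra.
Set Implicit Arguments. Unset Strict Implicit. Unset Printing Implicit Defensive.
Import Order.TTheory GRing.Theory Num.Theory passmx.
Local Open Scope ring_scope.

(* [lin_of f] and [scal_of f] carry the canonical linear structure of a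
   function proved linear, so that the generic [linear*] lemmas apply to it. *)
Section LinearOfAxiom.
Variables (R : fieldType) (U V : vectType R) (f : U -> V).
Hypothesis f_lin : linear f.

Definition lin_of := f.
HB.instance Definition _ := GRing.isLinear.Build R U V *:%R lin_of f_lin.

Lemma lin0 : f 0 = 0. Proof. by rewrite -/(lin_of _) linear0. Qed.
Lemma linD x y : f (x + y) = f x + f y. Proof. by rewrite -/(lin_of _) linearD. Qed.
Lemma linZ a x : f (a *: x) = a *: f x. Proof. by rewrite -/(lin_of _) linearZ. Qed.
Lemma linN x : f (- x) = - f x. Proof. by rewrite -/(lin_of _) linearN. Qed.
Lemma linB x y : f (x - y) = f x - f y. Proof. by rewrite -/(lin_of _) linearB. Qed.
Lemma lin_sum (I : finType) (F : I -> U) : f (\sum_i F i) = \sum_i f (F i).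
Proof. by rewrite -/(lin_of _) linear_sum. Qed.
Lemma lin_sumZ (I : finType) (c : I -> R) (F : I -> U) :
  f (\sum_i c i *: F i) = \sum_i c i *: f (F i).
Proof. by rewrite lin_sum; apply: eq_bigr => i _; rewrite linZ. Qed.
Lemma linfunE : linfun f =1 f. Proof. exact: (lfunE lin_of). Qed.
End LinearOfAxiom.

Section ScalarOfAxiom.
Variables (R : fieldType) (U : vectType R) (f : U -> R).
Hypothesis f_lin : scalar f.

Definition scal_of := f.
HB.instance Definition _ := GRing.isLinear.Build R U R *%R scal_of f_lin.

Lemma scal0 : f 0 = 0. Proof. by rewrite -/(scal_of _) linear0. Qed.
Lemma scalD x y : f (x + y) = f x + f y. Proof. by rewrite -/(scal_of _) linearD. Qed.
Lemma scalZ a x : f (a *: x) = a * f x. Proof. by rewrite -/(scal_of _) linearZ. Qed.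
Lemma scalN x : f (- x) = - f x. Proof. by rewrite -/(scal_of _) linearN. Qed.
Lemma scalB x y : f (x - y) = f x - f y. Proof. by rewrite -/(scal_of _) linearB. Qed.
Lemma scal_sum (I : finType) (F : I -> U) : f (\sum_i F i) = \sum_i f (F i).
Proof. by rewrite -/(scal_of _) linear_sum. Qed.
Lemma scal_sumZ (I : finType) (c : I -> R) (F : I -> U) :
  f (\sum_i c i *: F i) = \sum_i c i * f (F i).
Proof. by rewrite scal_sum; apply: eq_bigr => i _; rewrite scalZ. Qed.
End ScalarOfAxiom.

Section Trace.
Variables (R : rcfType) (V : vectType R).

Lemma eq_vtrace (h k : V -> V) : h =1 k -> vtrace h = vtrace k.
Proof. by move=> e; apply: eq_bigr => i _; rewrite e. Qed.

Lemma vtraceP a (h k : V -> V) :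
  vtrace (fun z => a *: h z + k z) = a * vtrace h + vtrace k.
Proof. by rewrite /vtrace mulr_sumr -big_split; apply: eq_bigr => i _; rewrite linearP. Qed.

Lemma vtrace0 : vtrace (fun _ : V => 0) = 0.
Proof. by rewrite /vtrace big1 // => i _; rewrite linear0. Qed.

Lemma vtraceZ a (h : V -> V) : vtrace (fun z => a *: h z) = a * vtrace h.
Proof.
rewrite -[RHS]addr0 -vtrace0 -vtraceP.
by apply: eq_vtrace => z; rewrite addr0.
Qed.

Lemma vtraceN (h : V -> V) : vtrace (fun z => - h z) = - vtrace h.
Proof. by rewrite -mulN1r -vtraceZ; apply: eq_vtrace => z; rewrite scaleN1r. Qed.

Lemma vtraceB (h k : V -> V) : vtrace (fun z => h z - k z) = vtrace h - vtrace k.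
Proof.
rewrite -mulN1r addrC -vtraceP.
by apply: eq_vtrace => z; rewrite scaleN1r addrC.
Qed.

Lemma vbasis_expand (vT : vectType R) (v : vT) :
  v = \sum_(i < \dim {:vT}) coord (vbasis fullv) i v *: tnth (vbasis fullv) i.
Proof.
by rewrite {1}(coord_vbasis (memvf v)); apply: eq_bigr => i _; rewrite (tnth_nth 0).
Qed.

Lemma vtraceC (W : vectType R) (A : W -> V) (C : V -> W) :
  linear A -> linear C -> vtrace (fun z => A (C z)) = vtrace (fun z => C (A z)).
Proof.
move=> linA linC; rewrite /vtrace.
under eq_bigr => k _ do rewrite {1}(vbasis_expand (C _)) (lin_sumZ linA) linear_sum.
under [RHS]eq_bigr => k _ do rewrite {1}(vbasis_expand (A _)) (lin_sumZ linC) linear_sum.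
rewrite exchange_big /=; apply: eq_bigr => j _; apply: eq_bigr => k _.
by rewrite !linearZ /= mulrC.
Qed.

End Trace.

Section ComplexEigenvalue.
Variables (R : rcfType) (V : vectType R).

(* [a + i b] is a complex eigenvalue of [T], so [(T - a)^2 + b^2] is singular. *)
Lemma linear_quadratic_kernel (T : V -> V) : linear T -> (exists x : V, x != 0) ->
  exists a b : R, exists2 x : V, x != 0 &
    T (T x - a *: x) - a *: (T x - a *: x) + b ^+ 2 *: x = 0.
Proof.
move=> linT [x0 x0_nz].
pose e := vbasis (fullv : {vspace V}); have e_basis : basis_of fullv e := vbasisP _.
have dim_gt0 : (0 < \dim {:V})%N.
  rewrite lt0n dimv_eq0; apply: contra x0_nz => /eqP V0.
  by move: (memvf x0); rewrite V0 memv0.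
pose A := mxof e e (linfun T).
have vecofT u : T (vecof e u) = vecof e (u *m A).
  by rewrite -hom_vecof //; symmetry; apply: (linfunE linT).
pose toC := real_complex R.
have [z /eigenvalueP [v vA v_nz]] := Theorem7' (map_mx toC A) dim_gt0.
pose a := complex.Re z; pose b := complex.Im z.
pose Q := (A - a%:M) *m (A - a%:M) + (b ^+ 2)%:M.
have vQ : v *m map_mx toC Q = 0.
  have vAa : v *m (map_mx toC A - (toC a)%:M) = (z - toC a) *: v.
    by rewrite mulmxBr vA mul_mx_scalar scalerBl.
  rewrite /Q map_mxD map_mxM map_mxB !map_scalar_mx /= mulmxDr mulmxA vAa.
  rewrite -scalemxAl vAa mul_mx_scalar scalerA -scalerDl rmorphXn.
  have sqr_dist (w r t i : R[i]) : i ^+ 2 = -1 -> w = r + i * t ->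
      (w - r) * (w - r) + t ^+ 2 = 0.
    by move=> i2 ->; rewrite -[t ^+ 2]mul1r -[1]opprK -i2; ring.
  by rewrite (sqr_dist z (toC a) (toC b) 'i%C (sqr_i R) (complexE z)) scale0r.
have : \det Q == 0.
  have : \det (map_mx toC Q) == 0 by apply/det0P; exists v.
  by rewrite det_map_mx fmorph_eq0.
case/det0P => u u_nz uQ; exists a, b, (vecof e u).
  by rewrite vecof_eq0.
have vecof_Ta w : T (vecof e w) - a *: vecof e w =
    vecof e (w *m (A - a%:M)).
  by rewrite vecofT mulmxBr mul_mx_scalar linearB [in RHS]linearZ.
rewrite !vecof_Ta -[_ *: vecof e u]linearZ -linearD /= -mul_mx_scalar.
by rewrite -mulmxA -mulmxDr uQ linear0.
Qed.

End ComplexEigenvalue.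

Section LieAlgebra.
Variables (R : rcfType) (V : vectType R) (br : V -> V -> V).
Hypothesis br_linl : forall a x y z, br (a *: x + y) z = a *: br x z + br y z.
Hypothesis br_linr : forall a x y z, br z (a *: x + y) = a *: br z x + br z y.
Hypothesis br_alt : forall x, br x x = 0.
Hypothesis br_jacobi :
  forall x y z, br x (br y z) + br y (br z x) + br z (br x y) = 0.

Lemma adr_linear x : linear (br x). Proof. by move=> a u v; rewrite br_linr. Qed.
Lemma adl_linear y : linear (br^~ y). Proof. by move=> a u v; rewrite br_linl. Qed.

Lemma br0l x : br 0 x = 0. Proof. exact: (lin0 (adl_linear x)). Qed.
Lemma br0r x : br x 0 = 0. Proof. exact: (lin0 (adr_linear x)). Qed.
Lemma brDl x y z : br (x + y) z = br x z + br y z. Proof. exact: (linD (adl_linear z)). Qed.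
Lemma brDr x y z : br z (x + y) = br z x + br z y. Proof. exact: (linD (adr_linear z)). Qed.
Lemma brZl a x z : br (a *: x) z = a *: br x z. Proof. exact: (linZ (adl_linear z)). Qed.
Lemma brZr a x z : br z (a *: x) = a *: br z x. Proof. exact: (linZ (adr_linear z)). Qed.
Lemma brNr x z : br z (- x) = - br z x. Proof. exact: (linN (adr_linear z)). Qed.
Lemma brBr x y z : br z (x - y) = br z x - br z y. Proof. exact: (linB (adr_linear z)). Qed.

Lemma br_antisym x y : br x y = - br y x.
Proof.
apply/eqP; rewrite -addr_eq0; apply/eqP.
by have := br_alt (x + y); rewrite brDl !brDr !br_alt add0r addr0.
Qed.

Lemma br_jacobiL x y w : br (br x y) w = br x (br y w) - br y (br x w).
Proof.
apply/eqP; rewrite eq_sym -subr_eq0; apply/eqP.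
by have := br_jacobi x y w; rewrite (br_antisym w x) brNr (br_antisym w (br x y)).
Qed.

Local Notation B := (mkilling br).

Lemma killing_linl y : scalar (B^~ y).
Proof.
move=> a x x'; rewrite /mkilling mulrN -opprD -vtraceP.
by congr (- _); apply: eq_vtrace => z; rewrite br_linl.
Qed.

Lemma killing_sym x y : B x y = B y x.
Proof. by rewrite /mkilling (vtraceC (adr_linear x) (adr_linear y)). Qed.

Lemma killing_linr x : scalar (B x).
Proof. by move=> a y y'; rewrite !(killing_sym x) killing_linl. Qed.

Lemma killing_invariant x y z : B (br x y) z = B x (br y z).
Proof.
rewrite /mkilling; congr (- _).
rewrite -(eq_vtrace (h := fun w => br x (br y (br z w)) - br y (br x (br z w)))); last first.
  by move=> w; rewrite br_jacobiL.
rewrite -[RHS](eq_vtrace (h := fun w => br x (br y (br z w)) - br x (br z (br y w)))); last first.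
  by move=> w; rewrite br_jacobiL brBr.
rewrite !vtraceB; congr (_ - _).
have adxz_linear : linear (fun w => br x (br z w)) by move=> a u v; rewrite !br_linr.
exact: (vtraceC (adr_linear y) adxz_linear).
Qed.

Lemma killing_ad_skew x y z : B (br z x) y + B x (br z y) = 0.
Proof. by rewrite br_antisym (scalN (killing_linl _)) killing_invariant addrC subrr. Qed.

Lemma killing_br_self x y : B (br x y) x = 0.
Proof.
have := killing_invariant x y x.
rewrite (br_antisym y x) (scalN (killing_linr _)) (killing_sym x); lra.
Qed.

Hypothesis killing_pos : forall x, x != 0 -> 0 < B x x.
Hypothesis br_simple : forall I : {vspace V},
  (forall x y, y \in I -> br x y \in I) -> I = 0%VS \/ I = fullv.

Lemma killing_nondeg x : (forall y, B x y = 0) -> x = 0.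
Proof. by move=> Bx0; apply/eqP; apply: contraT => /killing_pos; rewrite Bx0 ltxx. Qed.

Definition equivariant (T : V -> V) := forall x y, T (br x y) = br x (T y).

Lemma equivariant_eq0 T x0 : linear T -> equivariant T ->
  x0 != 0 -> T x0 = 0 -> forall x, T x = 0.
Proof.
move=> linT eqT x0_nz Tx0 x.
have memK y : (y \in lker (linfun T)) = (T y == 0) by rewrite memv_ker linfunE.
have K_ideal y z : z \in lker (linfun T) -> br y z \in lker (linfun T).
  by rewrite !memK => /eqP Tz; rewrite eqT Tz br0r.
have x0K : x0 \in lker (linfun T) by rewrite memK Tx0.
have [K0|Kfull] := br_simple K_ideal.
  by move: x0K; rewrite K0 memv0 (negPf x0_nz).
by apply/eqP; rewrite -memK Kfull memvf.
Qed.

(* An invariant complex structure would make the Killing form negative on its image. *)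
Lemma equivariant_sqr_neg T b : linear T -> equivariant T ->
  (forall x, T (T x) = - (b ^+ 2 *: x)) -> (exists x : V, x != 0) -> b = 0.
Proof.
move=> linT eqT TT [x x_nz]; apply/eqP; apply: contraT => b_nz.
have b2_gt0 : 0 < b ^+ 2 by rewrite exprn_even_gt0.
have Tx_nz : T x != 0.
  apply: contraNneq x_nz => Tx0; have := TT x; rewrite Tx0 (lin0 linT).
  by move/esym/eqP; rewrite oppr_eq0 scaler_eq0 gt_eqF.
have brT y w : br (T y) w = T (br y w).
  by rewrite br_antisym -eqT -(linN linT) -br_antisym.
have BTx : B (T x) (T x) = - (b ^+ 2 * B x x).
  rewrite /mkilling mulrN opprK -vtraceZ -vtraceN; apply: eq_vtrace => w.
  by rewrite !brT -eqT TT opprK.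
by have := killing_pos Tx_nz; rewrite BTx oppr_gt0 ltNge ltW // mulr_gt0 ?killing_pos.
Qed.

Lemma equivariant_scalar T : linear T -> equivariant T -> (exists x : V, x != 0) ->
  exists c, forall x, T x = c *: x.
Proof.
move=> linT eqT V_nz.
have [a [b [x x_nz Sx]]] := linear_quadratic_kernel linT V_nz.
pose S1 w := T w - a *: w.
have linS1 : linear S1.
  by move=> c w w'; rewrite /S1 linT scalerDr scalerBr !scalerA [c * a]mulrC opprD addrACA.
have eqS1 : equivariant S1 by move=> y w; rewrite /S1 eqT brBr brZr.
have S1S1 w : S1 (S1 w) = - (b ^+ 2 *: w).
  apply/eqP; rewrite -subr_eq0 opprK; apply/eqP; move: w.
  apply: (equivariant_eq0 _ _ x_nz Sx).
    by move=> c w w'; rewrite !linS1 !scalerDr !scalerA [c * _]mulrC addrACA.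
  by move=> y w; rewrite !eqS1 [RHS]brDr brZr.
have b0 := equivariant_sqr_neg linS1 eqS1 S1S1 V_nz.
have S1S1_0 w : S1 (S1 w) = 0 by rewrite S1S1 b0 expr0n scale0r oppr0.
have S1_0 : forall w, S1 w = 0.
  have [S1x0|S1x_nz] := eqVneq (S1 x) 0.
    exact: equivariant_eq0 linS1 eqS1 x_nz S1x0.
  exact: equivariant_eq0 linS1 eqS1 S1x_nz (S1S1_0 x).
by exists a => w; apply/eqP; rewrite -subr_eq0; apply/eqP; apply: S1_0.
Qed.

Local Notation e := (vbasis (fullv : {vspace V})).

Definition killing_gram : 'M[R]_(\dim {:V}) := \matrix_(k, l) B e`_k e`_l.

Lemma killing_vecof u (l : 'I_(\dim {:V})) : B (vecof e u) e`_l = (u *m killing_gram) 0 l.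
Proof.
rewrite (scal_sumZ (killing_linl _)) mxE.
by apply: eq_bigr => k _; rewrite mxE.
Qed.

Lemma killing_gram_unit : killing_gram \in unitmx.
Proof.
rewrite unitmxE unitfE; apply/negP => /det0P [u u_nz uG].
have Bu0 (l : 'I_(\dim {:V})) : B (vecof e u) e`_l = 0 by rewrite killing_vecof uG mxE.
have : B (vecof e u) (vecof e u) = 0.
  by rewrite {2}/vecof (scal_sumZ (killing_linr _)) big1 // => l _; rewrite Bu0 mulr0.
by move/eqP; rewrite gt_eqF // killing_pos // vecof_eq0 // vbasisP.
Qed.

Definition riesz (psi : V -> R) : V :=
  vecof e ((\row_l psi e`_l) *m invmx killing_gram).

Lemma rieszP psi : scalar psi -> forall y, B (riesz psi) y = psi y.
Proof.
move=> lin_psi y; rewrite {2}(coord_vbasis (memvf y)) (scal_sumZ lin_psi).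
rewrite {1}(coord_vbasis (memvf y)) (scal_sumZ (killing_linr _)).
apply: eq_bigr => l _; congr (_ * _).
by rewrite killing_vecof mulmxKV ?killing_gram_unit // mxE.
Qed.

Lemma invariant_form_killing_multiple (b : V -> V -> R) :
  (forall y, scalar (b^~ y)) -> (forall x, scalar (b x)) ->
  (forall z x y, b (br z x) y + b x (br z y) = 0) -> (exists x : V, x != 0) ->
  exists lam, forall x y, b x y = lam * B x y.
Proof.
move=> b_linl b_linr b_inv V_nz.
pose T x := riesz (b x).
have TP x y : B (T x) y = b x y by apply: rieszP.
have linT : linear T.
  move=> a x x'; apply/eqP; rewrite -subr_eq0; apply/eqP; apply: killing_nondeg => y.
  by rewrite (scalB (killing_linl _)) (killing_linl _) !TP b_linl subrr.
have eqT : equivariant T.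
  move=> z x; apply/eqP; rewrite -subr_eq0; apply/eqP; apply: killing_nondeg => y.
  rewrite (scalB (killing_linl _)) TP.
  have := killing_ad_skew (T x) y z; have := b_inv z x y; rewrite TP; lra.
have [c Tc] := equivariant_scalar linT eqT V_nz.
by exists c => x y; rewrite -TP Tc (scalZ (killing_linl _)).
Qed.

End LieAlgebra.

Lemma sum_mul_delta (R : pzSemiRingType) (m : nat) (F : 'I_m -> R) k :
  \sum_i F i * (i == k)%:R = F k.
Proof.
rewrite (bigD1 k) //= eqxx mulr1 big1 ?addr0 // => i ik.
by rewrite (negPf ik) mulr0.
Qed.

Lemma sum_scale_delta (R : pzRingType) (V : lmodType R) m (X : 'I_m -> V) j :
  \sum_i (i == j)%:R *: X i = X j.
Proof.
rewrite (bigD1 j) //= eqxx scale1r big1 ?addr0 // => i ij.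
by rewrite (negPf ij) scale0r.
Qed.

Section CoefficientProblem.
Variables (R : rcfType) (m : nat) (c : 'I_m -> R) (M : 'I_m -> 'I_m -> R).

Definition cperp (a : 'I_m -> R) := \sum_i c i * a i = 0.
Definition Mrow (a : 'I_m -> R) l := \sum_j M l j * a j.
Definition Mquad (a : 'I_m -> R) := \sum_i \sum_j M i j * a i * a j.
Definition c_basis (j : 'I_m) := forall i, c i = (i == j)%:R.

Hypothesis c_sum1 : \sum_i c i = 1.
Hypothesis M_sym : forall i j, M i j = M j i.
Hypothesis M_row0 : forall i, \sum_j M i j = 0.
Hypothesis Mquad_pos : forall a, cperp a -> (exists i, a i != 0) -> 0 < Mquad a.
Hypothesis M_nat_red : forall a b d, cperp a -> cperp b -> cperp d ->
  \sum_i \sum_j M i j * b i * (a i * d j - d i * a j) = 0.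

Lemma M_col0 i : \sum_j M j i = 0.
Proof. by rewrite -[RHS](M_row0 i); apply: eq_bigr => j _; rewrite M_sym. Qed.

Lemma Mrow_sym a b : \sum_l b l * Mrow a l = \sum_l a l * Mrow b l.
Proof.
under eq_bigr => l _ do rewrite mulr_sumr.
under [RHS]eq_bigr => l _ do rewrite mulr_sumr.
rewrite exchange_big /=; apply: eq_bigr => i _; apply: eq_bigr => j _.
by rewrite M_sym; ring.
Qed.

Lemma MquadE a : Mquad a = \sum_i a i * Mrow a i.
Proof. by apply: eq_bigr => i _; rewrite mulr_sumr; apply: eq_bigr => j _; ring. Qed.

Lemma cperp_shift v : cperp (fun i => v i - \sum_k c k * v k).
Proof.
rewrite /cperp; under eq_bigr => i _ do rewrite mulrBr.
by rewrite sumrB -mulr_suml c_sum1 mul1r subrr.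
Qed.

Lemma cperp_pair k l : cperp (fun i => c k * (i == l)%:R - c l * (i == k)%:R).
Proof.
rewrite /cperp; under eq_bigr => i _ do rewrite mulrBr !(mulrCA (c i)).
by rewrite sumrB -!mulr_sumr !sum_mul_delta mulrC subrr.
Qed.

(* Natural reductivity forces [W_k := sum_i M k i a_i b_i - b_k (M a)_k] to be
   orthogonal to c^perp, hence proportional to c; summing identifies the factor. *)
Lemma Mrow_mul_formula a b : cperp a -> cperp b -> forall k,
  \sum_i M k i * (a i * b i) - b k * Mrow a k = - (c k * \sum_l b l * Mrow a l).
Proof.
move=> ca cb.
pose W k := \sum_i M k i * (a i * b i) - b k * Mrow a k.
have W_perp d : cperp d -> \sum_l d l * W l = 0.
  move=> cd; rewrite -[RHS](M_nat_red ca cb cd).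
  under [RHS]eq_bigr => i _ do under eq_bigr => j _ do rewrite mulrBr.
  under [RHS]eq_bigr => i _ do rewrite sumrB.
  rewrite sumrB; transitivity (\sum_l \sum_i d l * (M l i * (a i * b i)) -
      \sum_l \sum_j d l * (b l * (M l j * a j))).
    by rewrite -sumrB; apply: eq_bigr => l _; rewrite mulrBr !mulr_sumr.
  congr (_ - _).
    rewrite exchange_big /=; apply: eq_bigr => i _; apply: eq_bigr => j _.
    by rewrite (M_sym j i); ring.
  by apply: eq_bigr => i _; apply: eq_bigr => j _; ring.
have W_sum : \sum_l W l = - \sum_l b l * Mrow a l.
  rewrite /W sumrB exchange_big /= big1 ?add0r // => i _.
  by rewrite -mulr_suml M_col0 mul0r.
move=> k; have := W_perp _ (cperp_shift (fun i => (i == k)%:R)).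
rewrite sum_mul_delta; under eq_bigr => l _ do rewrite mulrBl.
rewrite sumrB -mulr_sumr W_sum (eq_bigr (fun l => W l * (l == k)%:R)) => [|l _]; last exact: mulrC.
by rewrite sum_mul_delta mulrN opprK => /eqP; rewrite addr_eq0 => /eqP.
Qed.

Lemma Mrow_comm a b : cperp a -> cperp b -> forall l, b l * Mrow a l = a l * Mrow b l.
Proof.
move=> ca cb l.
have := Mrow_mul_formula ca cb l; have := Mrow_mul_formula cb ca l.
rewrite (Mrow_sym b a).
have -> : \sum_i M l i * (b i * a i) = \sum_i M l i * (a i * b i).
  by apply: eq_bigr => i _; rewrite [b i * _]mulrC.
lra.
Qed.

Lemma cperp_witness l : ~ c_basis l -> exists2 b, cperp b & b l != 0.
Proof.
move=> c_nonbasis; have [k /andP [kl ck]|] := pickP (fun k => (k != l) && (c k != 0)).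
  exists (fun i => c k * (i == l)%:R - c l * (i == k)%:R); first exact: cperp_pair.
  by rewrite eqxx [l == k]eq_sym (negPf kl) mulr1 mulr0 subr0.
move=> c_off; exfalso; apply: c_nonbasis => i.
have c0 k : k != l -> c k = 0 by move=> kl; apply/eqP; move: (c_off k); rewrite kl => /negbFE.
have [->|il] := eqVneq i l; last by rewrite c0.
by rewrite -c_sum1 (bigD1 l) //= big1 ?addr0 // => k; apply: c0.
Qed.

Lemma Mrow_diag l : ~ c_basis l -> exists kl, forall a, cperp a -> Mrow a l = kl * a l.
Proof.
case/cperp_witness => b cb bl; exists (Mrow b l / b l) => a ca.
by apply: (mulfI bl); rewrite Mrow_comm //; field.
Qed.

Lemma Mquad_delta l : Mquad (fun i => (i == l)%:R) = M l l.
Proof.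
rewrite /Mquad; under eq_bigr => i _ do rewrite (sum_mul_delta (fun j => M i j * (i == l)%:R)).
exact: (sum_mul_delta (fun i => M i l)).
Qed.

Lemma classify_basis j : c_basis j ->
  exists kap : 'I_m -> R, (forall l, l != j -> 0 < kap l) /\
    (forall a, cperp a -> forall l, l != j -> Mrow a l = kap l * a l).
Proof.
move=> cj.
have c_nonbasis l : l != j -> ~ c_basis l.
  move=> lj cl; have := cl j; rewrite cj eqxx eq_sym (negPf lj).
  by move/eqP; rewrite oner_eq0.
have cperp_delta l : l != j -> cperp (fun i => (i == l)%:R).
  by move=> lj; rewrite /cperp sum_mul_delta cj (negPf lj).
have /fin_all_exists [kap kapP] l :
    exists kl, l != j -> forall a, cperp a -> Mrow a l = kl * a l.
  have [->|lj] := eqVneq l j; first by exists 0.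
  by have [kl klP] := Mrow_diag (c_nonbasis l lj); exists kl.
exists kap; split => [l lj|a ca l lj]; last exact: kapP.
have := kapP l lj _ (cperp_delta l lj); rewrite eqxx mulr1 /Mrow sum_mul_delta => <-.
rewrite -Mquad_delta; apply: Mquad_pos; first exact: cperp_delta.
by exists l; rewrite eqxx oner_eq0.
Qed.

Section GenericCoefficients.
Variable kap : 'I_m -> R.
Hypothesis Mrow_kap : forall a, cperp a -> forall l, Mrow a l = kap l * a l.
Hypothesis c_nonbasis : forall l, ~ c_basis l.
Local Notation S := (\sum_i kap i).

Lemma kapE l : kap l = S * c l.
Proof.
pose a i := (i == l)%:R - \sum_k c k * (k == l)%:R.
have ca : cperp a := cperp_shift (fun i => (i == l)%:R).
have : \sum_i kap i * a i = 0.
  rewrite (eq_bigr (Mrow a)) => [|i _]; last by rewrite Mrow_kap.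
  by rewrite exchange_big big1 // => j _; rewrite -mulr_suml M_col0 mul0r.
rewrite /a sum_mul_delta; under eq_bigr => i _ do rewrite mulrBr.
rewrite sumrB sum_mul_delta -mulr_suml => /eqP; rewrite subr_eq0 => /eqP ->.
by rewrite mulrC.
Qed.

Lemma Mquad_kap a : cperp a -> Mquad a = \sum_i kap i * a i ^+ 2.
Proof. by move=> ca; rewrite MquadE; apply: eq_bigr => i _; rewrite Mrow_kap //; ring. Qed.

Lemma kap_sum_neq0 (l : 'I_m) : S != 0.
Proof.
apply/eqP => S0; have [b cb bl] := cperp_witness (@c_nonbasis l).
have := Mquad_pos cb (ex_intro _ l bl); rewrite Mquad_kap // big1 ?ltxx // => i _.
by rewrite kapE S0 !mul0r.
Qed.

Lemma c_neq0 l : c l != 0.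
Proof.
apply/eqP => cl0.
have cl : cperp (fun i => (i == l)%:R) by rewrite /cperp sum_mul_delta cl0.
have l_nz : exists i, (i == l)%:R != 0 :> R by exists l; rewrite eqxx oner_eq0.
have sqr_delta i : (i == l)%:R ^+ 2 = (i == l)%:R :> R.
  by case: (i == l); rewrite ?expr1n ?expr0n.
have := Mquad_pos cl l_nz; rewrite Mquad_kap //.
under eq_bigr => i _ do rewrite sqr_delta.
by rewrite sum_mul_delta kapE cl0 mulr0 ltxx.
Qed.

Lemma kap_neq0 l : kap l != 0.
Proof. by rewrite kapE mulf_neq0 ?c_neq0 ?(kap_sum_neq0 l). Qed.

Lemma kap_pos_off i j : i != j -> kap j < 0 -> 0 < kap i.
Proof.
move=> ij kj; rewrite ltNge; apply/negP => ki0.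
have ki : kap i < 0 by rewrite lt_neqAle kap_neq0.
pose a t := c i * (t == j)%:R - c j * (t == i)%:R.
have aj : a j != 0 by rewrite /a eqxx (eq_sym j i) (negPf ij) mulr1 mulr0 subr0 c_neq0.
have := Mquad_pos (cperp_pair i j) (ex_intro _ j aj); rewrite Mquad_kap; last exact: cperp_pair.
rewrite (bigD1 j) //= (bigD1 i) //= big1 ?addr0; last first.
  by move=> t /andP [ti tj]; rewrite /a (negPf ti) (negPf tj) !mulr0 subrr expr0n mulr0.
rewrite /a !eqxx (eq_sym j i) (negPf ij) !mulr1 !mulr0 subr0 sub0r sqrrN.
have ci2 : 0 < c i ^+ 2 by rewrite exprn_even_gt0 ?c_neq0.
have cj2 : 0 < c j ^+ 2 by rewrite exprn_even_gt0 ?c_neq0.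
have neg : kap j * c i ^+ 2 + kap i * c j ^+ 2 < 0.
  by rewrite -(addr0 0) ltrD // nmulr_rlt0.
by move=> pos; have := lt_trans pos neg; rewrite ltxx.
Qed.

Lemma kap_sum_lt0 j : kap j < 0 -> S < 0.
Proof.
move=> kj; rewrite ltNge; apply/negP => S_ge0.
have S_gt0 : 0 < S by rewrite lt_neqAle eq_sym kap_sum_neq0.
have cj : c j < 0 by move: kj; rewrite kapE pmulr_rlt0.
pose a t := (t == j)%:R - \sum_k c k * (k == j)%:R.
have ca : cperp a := cperp_shift (fun t => (t == j)%:R).
have aE t : a t = (t == j)%:R - c j by rewrite /a sum_mul_delta.
have aj : a j != 0 by rewrite aE eqxx subr_eq0 eq_sym (lt_eqF (lt_trans cj ltr01)).
have := Mquad_pos ca (ex_intro _ j aj); rewrite Mquad_kap //.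
have -> : \sum_i kap i * a i ^+ 2 = S * (c j - c j ^+ 2).
  have sqr_a t : a t ^+ 2 = (t == j)%:R * (1 - 2 * c j) + c j ^+ 2.
    by rewrite aE; case: (t == j) => /=; ring.
  under eq_bigr => i _ do rewrite sqr_a kapE -mulrA.
  rewrite -mulr_sumr; congr (_ * _).
  under eq_bigr => i _ do rewrite mulrDr mulrA.
  by rewrite big_split /= -mulr_suml sum_mul_delta -mulr_suml c_sum1 mul1r; ring.
have cj2 : 0 < c j ^+ 2 by rewrite exprn_even_gt0 ?c_neq0.
have neg : S * (c j - c j ^+ 2) < 0 by rewrite pmulr_rlt0 //; lra.
by move=> pos; have := lt_trans pos neg; rewrite ltxx.
Qed.

End GenericCoefficients.

Lemma classify_generic : (forall l, ~ c_basis l) ->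
  exists kap : 'I_m -> R,
    [/\ forall a, cperp a -> forall l, Mrow a l = kap l * a l,
        forall l, kap l != 0,
        forall l, kap l = (\sum_i kap i) * c l &
        (forall l, 0 < kap l) \/
        exists j, [/\ kap j < 0, forall i, i != j -> 0 < kap i & \sum_i kap i < 0]].
Proof.
move=> c_nonbasis.
have [kap Mrow_kap] : exists kap : 'I_m -> R,
    forall a, cperp a -> forall l, Mrow a l = kap l * a l.
  have [kap kapP] := fin_all_exists (fun l => Mrow_diag (c_nonbasis l)).
  by exists kap => a ca l; apply: kapP.
exists kap; split => [||l|]; first exact: Mrow_kap.
- exact: kap_neq0 Mrow_kap c_nonbasis.
- by have := kapE Mrow_kap l.
have [j kj|kap_nneg] := pickP (fun l => kap l < 0).
  right; exists j; split=> // [i ij|]; first by have := kap_pos_off Mrow_kap c_nonbasis ij kj.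
  by have := kap_sum_lt0 Mrow_kap c_nonbasis kj.
left=> l; rewrite lt_neqAle eq_sym (kap_neq0 Mrow_kap c_nonbasis) /= leNgt.
by apply/negbT; apply: kap_nneg.
Qed.

Lemma c_basis_dec : (exists j, c_basis j) \/ (forall l, ~ c_basis l).
Proof.
have [j /forallP cj|c_nb] := pickP (fun j => [forall i, c i == (i == j)%:R]).
  by left; exists j => i; apply/eqP.
right=> l cl; have := c_nb l; rewrite /= (_ : [forall i, _] = true) //.
by apply/forallP => i; rewrite cl.
Qed.

End CoefficientProblem.

Section ProductAlgebra.
Variables (R : rcfType) (fT : vectType R) (br : fT -> fT -> fT) (m : nat).
Hypothesis br_linl : forall a x y z, br (a *: x + y) z = a *: br x z + br y z.
Hypothesis br_linr : forall a x y z, br z (a *: x + y) = a *: br z x + br z y.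
Local Notation B := (mkilling br).
Local Notation g := (gT fT m).
Local Notation diag := (@diagf R fT m).

Definition gembed (i : 'I_m) (x : fT) : g := [ffun k => if k == i then x else 0].
Definition gtens (a : 'I_m -> R) (x : fT) : g := [ffun k => a k *: x].

Lemma gbrE (X Y : g) i : gbr br X Y i = br (X i) (Y i). Proof. exact: ffunE. Qed.
Lemma diagE x i : diag x i = x. Proof. exact: ffunE. Qed.

Lemma gbr_linl (Y : g) : linear (fun X : g => gbr br X Y).
Proof. by move=> a X X'; apply/ffunP => i; rewrite !ffunE br_linl. Qed.
Lemma gbr_linr (X : g) : linear (gbr br X).
Proof. by move=> a Y Y'; apply/ffunP => i; rewrite !ffunE br_linr. Qed.

Lemma gembed_linear i : linear (gembed i).
Proof.
by move=> a x y; apply/ffunP => k; rewrite !ffunE; case: (k == i); rewrite ?scaler0 ?addr0.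
Qed.

Lemma diag_linear : linear diag.
Proof. by move=> a x y; apply/ffunP => k; rewrite !ffunE. Qed.

Lemma sum_gembed (X : g) : X = \sum_i gembed i (X i).
Proof.
apply/ffunP => k; rewrite sum_ffunE (bigD1 k) //= big1 ?addr0; first by rewrite ffunE eqxx.
by move=> i ik; rewrite ffunE eq_sym (negPf ik).
Qed.

Lemma mem_hsp X : (X \in hsp fT m) <-> exists x, X = diag x.
Proof.
split; first by case/memv_imgP => x _ ->; exists x; rewrite (linfunE diag_linear).
by case=> x ->; rewrite -(linfunE diag_linear) memv_img ?memvf.
Qed.

Lemma diag_in_hsp x : diag x \in hsp fT m. Proof. by apply/mem_hsp; exists x. Qed.

Lemma gbr_diag z w : gbr br (diag z) (diag w) = diag (br z w).
Proof. by apply/ffunP => k; rewrite !ffunE. Qed.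

Lemma gbr_diag_gembed z i x : gbr br (diag z) (gembed i x) = gembed i (br z x).
Proof. by apply/ffunP => k; rewrite !ffunE; case: (k == i); rewrite ?(br0r br_linr). Qed.

Lemma gbr_gtens a b x y :
  gbr br (gtens a x) (gtens b y) = gtens (fun i => a i * b i) (br x y).
Proof.
by apply/ffunP => k; rewrite !ffunE (brZl br_linl) (brZr br_linr) scalerA mulrC.
Qed.

Lemma gkil_iE i (X Y : g) : gkil_i br i X Y = B (X i) (Y i).
Proof.
rewrite /gkil_i /gkil /mkilling; congr (- _).
pose h w := br (X i) (br (Y i) w).
rewrite -(eq_vtrace (h := fun Z : g => gembed i (h (Z i)))); last first.
  move=> Z; apply/ffunP => k; rewrite /gproj /gembed !ffunE /h.
  by case: eqP => [->|_] //; rewrite (br0l br_linl).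
have h_linear : linear (fun Z : g => h (Z i)) by move=> a Z Z'; rewrite /h !ffunE !br_linr.
rewrite (vtraceC (gembed_linear i) h_linear); apply: eq_vtrace => w.
by rewrite /h ffunE eqxx.
Qed.

Lemma QformE alpha (X Y : g) : Qform br alpha X Y = \sum_i alpha i * B (X i) (Y i).
Proof. by apply: eq_bigr => i _; rewrite gkil_iE. Qed.

End ProductAlgebra.

Section MetricPair.
Variables (R : rcfType) (fT : vectType R) (br : fT -> fT -> fT) (m : nat).
Hypothesis br_linl : forall a x y z, br (a *: x + y) z = a *: br x z + br y z.
Hypothesis br_linr : forall a x y z, br z (a *: x + y) = a *: br z x + br z y.
Hypothesis br_alt : forall x, br x x = 0.
Hypothesis br_jacobi :
  forall x y z, br x (br y z) + br y (br z x) + br z (br x y) = 0.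
Hypothesis killing_pos : forall x, x != 0 -> 0 < mkilling br x x.
Hypothesis br_simple : forall I : {vspace fT},
  (forall x y, y \in I -> br x y \in I) -> I = 0%VS \/ I = fullv.
Variables (x1 y1 : fT) (i0 : 'I_m).
Hypothesis br_x1y1 : br x1 y1 != 0.

Local Notation B := (mkilling br).
Local Notation g := (gT fT m).
Local Notation h := (hsp fT m).
Local Notation diag := (@diagf R fT m).

Variables (p : {vspace g}) (ip : g -> g -> R).
Hypothesis p_compl : (p + h)%VS = fullv.
Hypothesis p_cap : (p :&: h)%VS = 0%VS.
Hypothesis p_ad : forall Z X, Z \in h -> X \in p -> gbr br Z X \in p.
Hypothesis ip_sym : forall X Y, X \in p -> Y \in p -> ip X Y = ip Y X.
Hypothesis ip_linl : forall a X Y Z, X \in p -> Y \in p -> Z \in p ->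
  ip (a *: X + Y) Z = a * ip X Z + ip Y Z.
Hypothesis ip_pos : forall X, X \in p -> X != 0 -> 0 < ip X X.
Hypothesis ip_ad_skew : forall Z X Y, Z \in h -> X \in p -> Y \in p ->
  ip (gbr br Z X) Y + ip X (gbr br Z Y) = 0.

Local Notation projp := (daddv_pi p h).
Local Notation projh := (daddv_pi h p).

Lemma x1_neq0 : x1 != 0.
Proof. by apply: contra br_x1y1 => /eqP ->; rewrite (br0l br_linl). Qed.

Lemma f_neq0 : exists x : fT, x != 0.
Proof. by exists x1; apply: x1_neq0. Qed.

Lemma projpD X : projp X + projh X = X.
Proof. by apply: daddv_pi_add => //; rewrite p_compl memvf. Qed.

Lemma projh_id H : H \in h -> projh H = H.
Proof. by apply: daddv_pi_id; rewrite capvC. Qed.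

Lemma projp_h H : H \in h -> projp H = 0.
Proof.
move=> Hh; have := projpD H; rewrite projh_id // => E.
by apply: (@addIr _ H); rewrite E add0r.
Qed.

Lemma projh_p P : P \in p -> projh P = 0.
Proof.
move=> Pp; have := projpD P; rewrite (daddv_pi_id p_cap Pp) => E.
by apply: (@addrI _ P); rewrite E addr0.
Qed.

Lemma projpDh P H : P \in p -> H \in h -> projp (P + H) = P.
Proof. by move=> Pp Hh; rewrite linearD /= (daddv_pi_id p_cap Pp) projp_h // addr0. Qed.

Lemma projhDp P H : P \in p -> H \in h -> projh (P + H) = H.
Proof. by move=> Pp Hh; rewrite linearD /= projh_p // projh_id // add0r. Qed.

Definition phi X := projh X i0.

Lemma projhE X : projh X = diag (phi X).
Proof.
rewrite /phi; have /mem_hsp [x ->] : projh X \in h by apply: memv_pi.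
by rewrite diagE.
Qed.

Lemma gbr_diag_proj z X : gbr br (diag z) X =
  gbr br (diag z) (projp X) + gbr br (diag z) (projh X).
Proof. by rewrite -(linD (gbr_linr br_linr _)) projpD. Qed.

Lemma projp_equiv z X : projp (gbr br (diag z) X) = gbr br (diag z) (projp X).
Proof.
rewrite gbr_diag_proj projpDh ?p_ad ?diag_in_hsp ?memv_pi //.
by rewrite projhE gbr_diag diag_in_hsp.
Qed.

Lemma phi_equiv z X : phi (gbr br (diag z) X) = br z (phi X).
Proof.
rewrite /phi gbr_diag_proj projhDp ?p_ad ?diag_in_hsp ?memv_pi //.
  by rewrite gbrE diagE.
by rewrite projhE gbr_diag diag_in_hsp.
Qed.

Lemma phi_linear : linear phi.
Proof. by move=> a X Y; rewrite /phi linearP /= !ffunE. Qed.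

Lemma phi_diag x : phi (diag x) = x.
Proof. by rewrite /phi -[diag x]add0r projhDp ?mem0v ?diag_in_hsp // diagE. Qed.

Lemma mem_p_phi X : (X \in p) = (phi X == 0).
Proof.
apply/idP/idP => [Xp|/eqP phi0]; first by rewrite /phi projh_p // ffunE.
rewrite -(projpD X) projhE phi0 (lin0 (@diag_linear _ _ m)) addr0; exact: memv_pi.
Qed.

Lemma phi_coefs : exists c : 'I_m -> R, forall X, phi X = \sum_i c i *: X i.
Proof.
have /fin_all_exists [c cP] i : exists ci, forall x, phi (gembed i x) = ci *: x.
  apply: (equivariant_scalar br_linl br_linr br_alt killing_pos br_simple).
  - by move=> a x y; rewrite (gembed_linear i) phi_linear.
  - by move=> x y; rewrite -(gbr_diag_gembed br_linr) phi_equiv.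
  - exact: f_neq0.
exists c => X; rewrite {1}(sum_gembed X) (lin_sum phi_linear).
by apply: eq_bigr => i _; rewrite cP.
Qed.

Definition ipg X Y := ip (projp X) (projp Y).

Lemma ipg_linl Y : scalar (ipg^~ Y).
Proof. by move=> a X X'; rewrite /ipg linearP /= ip_linl ?memv_pi. Qed.

Lemma ipg_sym X Y : ipg X Y = ipg Y X.
Proof. by rewrite /ipg ip_sym ?memv_pi. Qed.

Lemma ipg_linr X : scalar (ipg X).
Proof. by move=> a Y Y'; rewrite !(ipg_sym X) ipg_linl. Qed.

Lemma ipg_p X Y : X \in p -> Y \in p -> ipg X Y = ip X Y.
Proof. by move=> Xp Yp; rewrite /ipg !daddv_pi_id. Qed.

Lemma ipg_h H Y : H \in h -> ipg H Y = 0.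
Proof.
move=> Hh; rewrite /ipg projp_h //.
have := ip_linl 1 (mem0v p) (mem0v p) (memv_pi p h Y).
rewrite scale1r addr0 mul1r => E.
by apply: (@addrI _ (ip 0 (projp Y))); rewrite addr0 -E.
Qed.

Lemma ipg_ad_skew z X Y :
  ipg (gbr br (diag z) X) Y + ipg X (gbr br (diag z) Y) = 0.
Proof. by rewrite /ipg !projp_equiv ip_ad_skew ?diag_in_hsp ?memv_pi. Qed.

Lemma ipg_coefs : exists M : 'I_m -> 'I_m -> R,
  forall i j x y, ipg (gembed i x) (gembed j y) = M i j * B x y.
Proof.
have /fin_all_exists [M MP] (ij : 'I_m * 'I_m) : exists l,
    forall x y, ipg (gembed ij.1 x) (gembed ij.2 y) = l * B x y.
  case: ij => i j; apply: (invariant_form_killing_multiple br_linl br_linr br_alt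
    br_jacobi killing_pos br_simple).
  - by move=> y a x x'; rewrite (gembed_linear i) ipg_linl.
  - by move=> x a y y'; rewrite (gembed_linear j) ipg_linr.
  - by move=> z x y; rewrite -!(gbr_diag_gembed br_linr) ipg_ad_skew.
  - exact: f_neq0.
by exists (fun i j => M (i, j)) => i j; apply: (MP (i, j)).
Qed.

Lemma killing_x1_pos : 0 < B x1 x1. Proof. exact: killing_pos x1_neq0. Qed.

Section Coefficients.
Variables (c : 'I_m -> R) (M : 'I_m -> 'I_m -> R).
Hypothesis phi_c : forall X, phi X = \sum_i c i *: X i.
Hypothesis ipg_M : forall i j x y, ipg (gembed i x) (gembed j y) = M i j * B x y.

Lemma ipg_expand X Y : ipg X Y = \sum_i \sum_j M i j * B (X i) (Y j).
Proof.
rewrite {1}(sum_gembed X) (scal_sum (ipg_linl Y)); apply: eq_bigr => i _.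
by rewrite {1}(sum_gembed Y) (scal_sum (ipg_linr _)); apply: eq_bigr => j _.
Qed.

Lemma M_sym i j : M i j = M j i.
Proof. by apply: (mulIf (lt0r_neq0 killing_x1_pos)); rewrite -!ipg_M ipg_sym. Qed.

Lemma M_row0 i : \sum_j M i j = 0.
Proof.
apply: (mulIf (lt0r_neq0 killing_x1_pos)); rewrite mul0r mulr_suml.
transitivity (ipg (gembed i x1) (diag x1)); last by rewrite ipg_sym ipg_h ?diag_in_hsp.
rewrite [in RHS](sum_gembed (diag x1)) (scal_sum (ipg_linr _)).
by apply: eq_bigr => j _; rewrite ipg_M diagE.
Qed.

Lemma c_sum1 : \sum_i c i = 1.
Proof.
have := phi_diag x1; rewrite phi_c; under eq_bigr => i _ do rewrite diagE.
rewrite -scaler_suml => /eqP; rewrite -subr_eq0 -{2}(scale1r x1) -scalerBl.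
by rewrite scaler_eq0 (negPf x1_neq0) orbF subr_eq0 => /eqP.
Qed.

Lemma mem_p_c X : (X \in p) = (\sum_i c i *: X i == 0).
Proof. by rewrite mem_p_phi phi_c. Qed.

Lemma gtens_in_p a x : cperp c a -> gtens a x \in p.
Proof.
move=> ca; rewrite mem_p_c; under eq_bigr => i _ do rewrite ffunE scalerA.
by rewrite -scaler_suml ca scale0r.
Qed.

Lemma ipg_gtens a b x y :
  ipg (gtens a x) (gtens b y) = (\sum_i \sum_j M i j * a i * b j) * B x y.
Proof.
rewrite ipg_expand mulr_suml; apply: eq_bigr => i _; rewrite mulr_suml.
apply: eq_bigr => j _; rewrite !ffunE (scalZ (killing_linl br_linl _)).
by rewrite (scalZ (killing_linr br_linl br_linr _)); ring.
Qed.

Lemma Mquad_pos a : cperp c a -> (exists i, a i != 0) -> 0 < Mquad M a.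
Proof.
move=> ca [i ai]; have ax_p := gtens_in_p x1 ca.
have ax_nz : gtens a x1 != 0.
  apply/eqP => /ffunP /(_ i); rewrite !ffunE => /eqP.
  by rewrite scaler_eq0 (negPf ai) (negPf x1_neq0).
by have := ip_pos ax_p ax_nz; rewrite -ipg_p // ipg_gtens pmulr_lgt0 // killing_x1_pos.
Qed.

Lemma Mrow_vec l k : (forall a, cperp c a -> Mrow M a l = k * a l) ->
  forall Y, Y \in p -> \sum_j M l j *: Y j = k *: Y l.
Proof.
move=> Mrow_l Y Yp; apply: (can_inj (rVofK (vbasisP fullv))).
apply/rowP => n; rewrite !mxE linear_sum linearZ /=.
pose a j := coord (vbasis fullv) n (Y j).
have ca : cperp c a.
  move: Yp; rewrite mem_p_c => /eqP /(congr1 (coord (vbasis fullv) n)).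
  rewrite linear_sum linear0 => sum0; rewrite /cperp -[RHS]sum0.
  by apply: eq_bigr => i _; rewrite linearZ.
by rewrite -[RHS]/(k * a l) -Mrow_l //; apply: eq_bigr => j _; rewrite linearZ.
Qed.

Lemma ip_expand X Y : X \in p -> Y \in p ->
  ip X Y = \sum_i B (X i) (\sum_j M i j *: Y j).
Proof.
move=> Xp Yp; rewrite -ipg_p // ipg_expand; apply: eq_bigr => i _.
by rewrite (scal_sumZ (killing_linr br_linl br_linr _)).
Qed.

Hypothesis p_nat_red : nat_red_pair br p ip.

Lemma ipg_nat_red X Y : X \in p -> Y \in p -> ipg (gbr br X Y) X = 0.
Proof.
move=> Xp Yp; rewrite /ipg (daddv_pi_id p_cap Xp).
apply: (p_nat_red Xp Yp (memv_pi _ _ _)).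
by rewrite -{1}(projpD (gbr br X Y)) addrC addKr memv_pi.
Qed.

Lemma ipg_nat_red_polar X Y Z : X \in p -> Y \in p -> Z \in p ->
  ipg (gbr br X Y) Z + ipg (gbr br Z Y) X = 0.
Proof.
move=> Xp Yp Zp; have := ipg_nat_red (memvD Xp Zp) Yp.
rewrite (linD (gbr_linl br_linl Y)) (scalD (ipg_linl _)) !(scalD (ipg_linr _)).
by rewrite (ipg_nat_red Xp Yp) (ipg_nat_red Zp Yp); lra.
Qed.

Lemma M_nat_red a b d : cperp c a -> cperp c b -> cperp c d ->
  \sum_i \sum_j M i j * b i * (a i * d j - d i * a j) = 0.
Proof.
move=> ca cb cd; pose w := br x1 y1.
have := ipg_nat_red_polar (gtens_in_p x1 ca) (gtens_in_p y1 cb) (gtens_in_p w cd).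
rewrite !(gbr_gtens br_linl br_linr) !ipg_gtens.
have -> : B (br w y1) x1 = - B w w.
  rewrite (killing_invariant br_linl br_linr br_alt br_jacobi).
  rewrite (br_antisym br_linl br_linr br_alt y1 x1).
  by rewrite (scalN (killing_linr br_linl br_linr _)).
have w_pos : 0 < B w w by apply: killing_pos.
move=> polar; have /eqP : ((\sum_i \sum_j M i j * (a i * b i) * d j) -
    (\sum_i \sum_j M i j * (d i * b i) * a j)) * B w w = 0.
  by rewrite mulrBl; move: polar; rewrite /w; lra.
rewrite mulf_eq0 (gt_eqF w_pos) orbF => /eqP diff0; rewrite -[RHS]diff0.
rewrite -sumrB; apply: eq_bigr => i _; rewrite -sumrB; apply: eq_bigr => j _; ring.
Qed.

Lemma nat_red_cases : case_a br p ip \/ case_b br p ip.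
Proof.
have [[j cj]|c_nonbasis] := c_basis_dec c.
  have [kap [kap_pos Mrow_kap]] :=
    classify_basis c_sum1 M_sym M_row0 Mquad_pos M_nat_red cj.
  have mem_pj X : (X \in p) = (X j == 0).
    by rewrite mem_p_c; under eq_bigr => i _ do rewrite cj; rewrite sum_scale_delta.
  left; exists j, kap; split => // X Y Xp Yp.
  rewrite ip_expand // (bigD1 j) //= (eqP (etrans (esym (mem_pj X)) Xp)).
  rewrite (scal0 (killing_linl br_linl _)) add0r; apply: eq_bigr => i ij.
  rewrite (Mrow_vec (fun a ca => Mrow_kap a ca i ij) Yp) (gkil_iE br_linl br_linr).
  by rewrite (scalZ (killing_linr br_linl br_linr _)).
have [kap [Mrow_kap kap_nz kapE kap_sign]] :=
  classify_generic c_sum1 M_sym M_row0 Mquad_pos M_nat_red c_nonbasis.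
have S_nz : \sum_i kap i != 0.
  by apply: contra (kap_nz i0) => /eqP S0; rewrite kapE S0 mul0r.
have Q_diag X z : Qform br kap X (diag z) = (\sum_i kap i) * B (\sum_i c i *: X i) z.
  rewrite (QformE br_linl br_linr) (scal_sumZ (killing_linl br_linl z)) mulr_sumr.
  by apply: eq_bigr => i _; rewrite diagE kapE; ring.
right; exists kap; split => // X.
  split=> [Xp Z /mem_hsp [z ->]|Q0].
    by move: Xp; rewrite Q_diag mem_p_c => /eqP ->; rewrite (scal0 (killing_linl br_linl _)) mulr0.
  rewrite mem_p_c; apply/eqP; apply: (killing_nondeg killing_pos) => y.
  by have /eqP := Q0 _ (diag_in_hsp m y); rewrite Q_diag mulf_eq0 (negPf S_nz) => /eqP.
move=> Y Xp Yp; rewrite ip_expand // (QformE br_linl br_linr); apply: eq_bigr => i _.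
by rewrite (Mrow_vec (fun a ca => Mrow_kap a ca i) Yp) (scalZ (killing_linr br_linl br_linr _)).
Qed.

End Coefficients.

Lemma case_a_nat_red : case_a br p ip -> nat_red_pair br p ip.
Proof.
move=> [j [beta [mem_pj _ ipE]]] X Y W Xp Yp Wp XYW.
have XYp : gbr br X Y \in p.
  move: Xp Yp; rewrite !mem_pj gbrE => /eqP -> _; exact/eqP/(br0l br_linl).
have -> : W = gbr br X Y.
  apply/eqP; rewrite eq_sym -subr_eq0 -memv0 -p_cap memv_cap XYW andbT.
  exact: memvB.
rewrite ipE // big1 // => i _.
by rewrite (gkil_iE br_linl br_linr) gbrE (killing_br_self br_linl br_linr br_alt br_jacobi) mulr0.
Qed.

Lemma case_b_nat_red : case_b br p ip -> nat_red_pair br p ip.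
Proof.
move=> [alpha [_ Q_perp ipE _]] X Y W Xp Yp Wp XYW.
rewrite ipE //; have -> : W = gbr br X Y + (W - gbr br X Y) by rewrite addrC subrK.
rewrite (QformE br_linl br_linr).
under eq_bigr => i _ do rewrite ffunE (scalD (killing_linl br_linl _)) mulrDr gbrE.
rewrite big_split /= big1 ?add0r => [|i _]; last first.
  by rewrite (killing_br_self br_linl br_linr br_alt br_jacobi) mulr0.
have := proj1 (Q_perp X) Xp _ XYW; rewrite (QformE br_linl br_linr) => Q0.
rewrite -[RHS]oppr0 -[in RHS]Q0 -sumrN; apply: eq_bigr => i _.
rewrite (killing_sym br_linr) -mulrN -(scalN (killing_linr br_linl br_linr _)).
by rewrite !ffunE opprB.
Qed.

Lemma nat_red_iff_cases : nat_red_pair br p ip <-> case_a br p ip \/ case_b br p ip.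
Proof.
split=> [nr|[/case_a_nat_red|/case_b_nat_red] //].
have [c phi_c] := phi_coefs; have [M ipg_M] := ipg_coefs.
exact: nat_red_cases phi_c ipg_M nr.
Qed.

End MetricPair.

Lemma metric_pair_nat_red_iff (R : rcfType) (fT : vectType R) (br : fT -> fT -> fT)
    (m : nat) (i0 : 'I_m) (p : {vspace gT fT m}) (ip : gT fT m -> gT fT m -> R) :
  compact_simple_lie br -> metric_pair br p ip ->
  nat_red_pair br p ip <-> case_a br p ip \/ case_b br p ip.
Proof.
case=> br_linl [br_linr [br_alt [br_jacobi [killing_pos [[x1 [y1 br_x1y1]] br_simple]]]]].
case=> p_compl [p_cap [p_ad [ip_sym [ip_linl [ip_pos ip_ad_skew]]]]].
exact: (nat_red_iff_cases br_linl br_linr br_alt br_jacobi killing_pos br_simple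
  i0 br_x1y1 p_compl p_cap p_ad ip_sym ip_linl ip_pos ip_ad_skew).
Qed.

Unset Implicit Arguments.

Theorem theorem1 (R : rcfType) (fT : vectType R) (br : fT -> fT -> fT)
    (m : nat) (hm : (2 <= m)%N) (hf : compact_simple_lie br)
    (p0 : {vspace gT fT m}) (ip0 : gT fT m -> gT fT m -> R)
    (hp0 : metric_pair br p0 ip0) :
  naturally_reductive br p0 ip0 <->
  exists (p : {vspace gT fT m}) (ip : gT fT m -> gT fT m -> R),
    [/\ metric_pair br p ip, same_metric p0 ip0 p ip &
        case_a br p ip \/ case_b br p ip].
Proof.
have i0 : 'I_m := Ordinal (ltnW hm).
split=> [[p [ip [mp sm nr]]]|[p [ip [mp sm cases]]]]; exists p, ip.
  by split=> //; apply/(metric_pair_nat_red_iff i0 hf mp).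
by split=> //; apply/(metric_pair_nat_red_iff i0 hf mp).
Qed.
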